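(* The $\sigma$-ideal $I_P$ is not generated by closed sets in the Baire topology on $(\omega+1)^\omega$: there is a Borel set $A\in I_P$ such that $A$ is not contained in any countable union of sets $F_n$, each closed in the Baire topology and each belonging to $I_P$.
   Context: The Cantor topology on $(\omega+1)^\omega$ is the product of the order topologies on $\omega+1$; the Baire topology is generated by the sets $[\sigma]=\{x:\sigma\subseteq x\}$, $\sigma\in(\omega+1)^{<\omega}$. $P:(\omega+1)^\omega\to\omega^\omega$ is given by $P(x)(n)=x(n)+1$ if $x(n)<\omega$, $P(x)(n)=0$ if $x(n)=\omega$. $I_P$ is the $\sigma$-ideal of sets $A\subseteq(\omega+1)^\omega$ that can be covered by countably many sets on each of which $P$ is continuous (w.r.t. the Cantor topology). An ideal $I$ is generated by closed sets if every Borel set in $I$ has an $F_\sigma$ superset in $I$. *)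

From Stdlib Require Import Arith.

(* omega+1 is represented by [option nat]: [Some n] is the natural number n,
   [None] is omega (the top element). *)
Definition Xsp := nat -> option nat.
Definition subset := Xsp -> Prop.

(* Baire topology: generated by the cylinders [sigma], i.e. products of the
   discrete topology on omega+1.  U is open iff every x in U has a cylinder
   nbhd {y | y agrees with x below n} inside U. *)
Definition baire_open (U : subset) : Prop :=
  forall x, U x -> exists n, forall y, (forall i, i < n -> y i = x i) -> U y.

Definition baire_closed (F : subset) : Prop :=
  baire_open (fun x => ~ F x).

(* Cantor topology: product of the order topologies on omega+1.
   Basic nbhd of a point a of omega+1 indexed by m: {a} if a is finite,
   the interval (m-1, omega] = {b | b = omega or b >= m} if a = omega. *)
Definition ord_close (m : nat) (a b : option nat) : Prop :=
  match a with
  | Some k => b = Some k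
  | None => match b with None => True | Some j => m <= j end
  end.

Definition cantor_close (n m : nat) (x y : Xsp) : Prop :=
  forall i, i < n -> ord_close m (x i) (y i).

Definition P (x : Xsp) : nat -> nat :=
  fun n => match x n with Some k => S k | None => 0 end.

(* P restricted to A is continuous, A carrying the subspace topology of the
   Cantor topology and omega^omega its usual (product of discrete) topology. *)
Definition P_continuous_on (A : subset) : Prop :=
  forall x, A x -> forall n, exists N m, forall y, A y -> cantor_close N m x y ->
    forall i, i < n -> P y i = P x i.

(* The sigma-ideal I_P: sets covered by countably many sets on each of which
   P is continuous (a finite cover can be padded with empty sets). *)
Definition in_IP (A : subset) : Prop :=
  exists B : nat -> subset,
    (forall k, P_continuous_on (B k)) /\ (forall x, A x -> exists k, B k x).

(* Borel sets of (omega+1)^omega: the sigma-algebra generated by the Baire-open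
   sets (it coincides with the one generated by the Cantor-open sets). *)
Inductive borel : subset -> Prop :=
  | borel_open : forall U, baire_open U -> borel U
  | borel_compl : forall A, borel A -> borel (fun x => ~ A x)
  | borel_union : forall A : nat -> subset, (forall n, borel (A n)) ->
      borel (fun x => exists n, A n x).

(* Coordinate 2i of a point is watched by the odd "flag" coordinates [flag i j].
   The set [flagged] consists of the points whose odd coordinates are finite and
   in which coordinate 2i is omega exactly when one of its flags is 0.  P is
   continuous on it: a finite value is isolated in omega+1, and at an omega
   coordinate 2i a flag that is 0 forces coordinate 2i of every point of the set
   near it to be omega as well.  The set is a dense G_delta in the closed set
   [consistent] (flags that are 0 only watch omega coordinates).  Suppose it were
   covered by Baire-closed sets F_n in I_P.  The closed sets of consistent points
   with coordinate 2i = omega and no flag up are nowhere dense (a flag can always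
   be raised), so by the Baire category theorem in [consistent] some F_n contains a
   relatively open piece of [consistent].  No set in I_P does: where all flags
   beyond the piece stay down, a coordinate 2i can be set freely to omega or to any
   finite value, and a second Baire category argument produces in one set of a
   continuity cover a point with coordinate 2i = omega that is a Cantor limit of
   points of the same set with coordinate 2i finite, so P is not continuous there. *)
From Stdlib Require Import Arith Lia Classical FunctionalExtensionality
  PropExtensionality IndefiniteDescription Cantor.

Definition agree (x y : Xsp) (n : nat) : Prop := forall i, i < n -> x i = y i.

Lemma agree_le x y m n : n <= m -> agree x y m -> agree x y n.
Proof. intros Hnm H i Hi. apply H. lia. Qed.

Lemma agree_trans x y z n : agree x y n -> agree y z n -> agree x z n.
Proof. intros Hxy Hyz i Hi. rewrite Hxy by exact Hi. apply Hyz, Hi. Qed.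

Definition set_coord (x : Xsp) (c : nat) (v : option nat) : Xsp :=
  fun i => if Nat.eq_dec i c then v else x i.

Lemma set_coord_same x c v : set_coord x c v c = v.
Proof. unfold set_coord. destruct (Nat.eq_dec c c); congruence. Qed.

Lemma set_coord_other x c v i : i <> c -> set_coord x c v i = x i.
Proof. intro ne. unfold set_coord. destruct (Nat.eq_dec i c); tauto. Qed.

Lemma agree_set_coord x c v n : n <= c -> agree (set_coord x c v) x n.
Proof. intros Hnc i Hi. apply set_coord_other. lia. Qed.

(** * The Baire category theorem for closed subsets of the Baire space *)

Definition nowhere_dense_in (K G : subset) : Prop :=
  forall w M, K w -> exists w' M', K w' /\ agree w' w M /\ M < M' /\
    forall y, K y -> agree y w' M' -> ~ G y.

Definition dense_near (K G : subset) (w : Xsp) (M : nat) : Prop :=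
  forall w', K w' -> agree w' w M ->
    forall M', exists y, K y /\ G y /\ agree y w' M'.

Lemma dense_near_of_not_nowhere_dense K G :
  ~ nowhere_dense_in K G -> exists w M, K w /\ dense_near K G w M.
Proof.
  intro HG. apply NNPP; intro Hno. apply HG; intros w M Kw.
  apply NNPP; intro Hw. apply Hno. exists w, M. split; [exact Kw|].
  intros w' Kw' Aw' M'. apply NNPP; intro Hy. apply Hw.
  exists w', (Nat.max M' (S M)). repeat split; [exact Kw' | exact Aw' | lia |].
  intros y Ky Ay Gy. apply Hy. exists y. repeat split; [exact Ky | exact Gy |].
  apply (agree_le _ _ _ _ (Nat.le_max_l M' (S M)) Ay).
Qed.

Lemma closed_dense_near_sub F K w M : baire_closed F -> dense_near K F w M ->
  forall y, K y -> agree y w M -> F y.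
Proof.
  intros HF HD y Ky Ay. apply NNPP; intro Fy.
  destruct (HF y Fy) as [N HN].
  destruct (HD y Ky Ay N) as (y' & _ & Fy' & Ay').
  exact (HN y' Ay' Fy').
Qed.

Lemma fusion_limit (K : subset) (w : nat -> Xsp) (M : nat -> nat) :
  baire_closed K -> (forall n, K (w n)) -> (forall n, M n < M (S n)) ->
  (forall n, agree (w (S n)) (w n) (M n)) ->
  exists x, K x /\ forall n, agree x (w n) (M n).
Proof.
  intros HK Kw HM Hw.
  assert (M_ge : forall n, n <= M n).
  { induction n as [|n IH]; [lia|]. specialize (HM n). lia. }
  assert (M_mono : forall a b, a <= b -> M a <= M b).
  { induction 1 as [|b _ IH]; [lia|]. specialize (HM b). lia. }
  assert (chain : forall a b, a <= b -> agree (w b) (w a) (M a)).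
  { induction 1 as [|b Hab IH]; [intros i _; reflexivity|].
    apply (agree_trans _ (w b)); [|exact IH].
    apply (agree_le _ _ (M b)); [apply M_mono, Hab | apply Hw]. }
  assert (Hx : forall n, agree (fun c => w (S c) c) (w n) (M n)).
  { intros n c Hc. destruct (le_lt_dec (S c) n) as [h|h].
    - symmetry. apply (chain _ _ h). specialize (M_ge (S c)). lia.
    - apply (chain n (S c)); [lia | exact Hc]. }
  exists (fun c => w (S c) c). split; [|exact Hx].
  apply NNPP; intro nK. destruct (HK _ nK) as [n Hn].
  apply (Hn (w n)); [|apply Kw].
  intros i Hi. symmetry. apply Hx. specialize (M_ge n). lia.
Qed.

Section BaireCategory.

Variable K : subset.
Hypothesis K_closed : baire_closed K.
Variable G : nat -> subset.
Hypothesis G_nowhere_dense : forall k, nowhere_dense_in K (G k).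

Definition refines k (p q : Xsp * nat) : Prop :=
  K (fst q) /\ agree (fst q) (fst p) (snd p) /\ snd p < snd q /\
  forall y, K y -> agree y (fst q) (snd q) -> ~ G k y.

Lemma refines_exists k p : exists q, K (fst p) -> refines k p q.
Proof.
  destruct (classic (K (fst p))) as [Kp|nKp].
  - destruct (G_nowhere_dense k (fst p) (snd p) Kp) as (w & M & H).
    exists (w, M). intros _. exact H.
  - exists p. intro Kp. contradiction.
Qed.

Definition refine k p : Xsp * nat :=
  proj1_sig (constructive_indefinite_description _ (refines_exists k p)).

Lemma refine_spec k p : K (fst p) -> refines k p (refine k p).
Proof. exact (proj2_sig (constructive_indefinite_description _ (refines_exists k p))). Qed.

Fixpoint fusion (p0 : Xsp * nat) (n : nat) : Xsp * nat :=
  match n with 0 => p0 | S n => refine n (fusion p0 n) end.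

Lemma fusion_in p0 n : K (fst p0) -> K (fst (fusion p0 n)).
Proof.
  intro Kp0. induction n as [|n IH]; [exact Kp0|]. apply (refine_spec n _ IH).
Qed.

Theorem baire_category : (exists w, K w) -> exists x, K x /\ forall k, ~ G k x.
Proof.
  intros [w0 Kw0].
  pose (p := fusion (w0, 0)).
  assert (step : forall n, refines n (p n) (p (S n)))
    by (intro n; apply refine_spec, fusion_in, Kw0).
  destruct (fusion_limit K (fun n => fst (p n)) (fun n => snd (p n)) K_closed)
    as (x & Kx & Ax); [intro n; apply fusion_in, Kw0 | apply step | apply step |].
  exists x. split; [exact Kx|]. intros k Gk.
  apply (step k) with x; [exact Kx | apply Ax | exact Gk].
Qed.

End BaireCategory.

Corollary baire_category2 (K : subset) (F G : nat -> subset) :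
  baire_closed K -> (exists w, K w) ->
  (forall n, nowhere_dense_in K (F n)) -> (forall n, nowhere_dense_in K (G n)) ->
  exists x, K x /\ (forall n, ~ F n x) /\ (forall n, ~ G n x).
Proof.
  intros HK HK0 HF HG.
  pose (FG := fun k => if Nat.even k then F (Nat.div2 k) else G (Nat.div2 k)).
  destruct (baire_category K HK FG) as (x & Kx & Hx); [|exact HK0|].
  { intro k. unfold FG. destruct (Nat.even k); auto. }
  exists x. split; [exact Kx | split]; intros n Hn.
  - apply (Hx (2 * n)). unfold FG. rewrite Nat.even_even, Nat.div2_double. exact Hn.
  - apply (Hx (2 * n + 1)). unfold FG. rewrite Nat.even_odd, Nat.div2_odd'. exact Hn.
Qed.

(** * Flags and the set A *)

Definition flag (i j : nat) : nat := S (2 * Cantor.to_nat (i, j)).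

Lemma flag_gt i j : 2 * i < flag i j /\ j < flag i j.
Proof. unfold flag. pose proof (Cantor.to_nat_non_decreasing i j). lia. Qed.

Lemma flag_inj i j i' j' : flag i j = flag i' j' -> i = i' /\ j = j'.
Proof.
  unfold flag. intro H.
  assert (E : Cantor.to_nat (i, j) = Cantor.to_nat (i', j')) by lia.
  apply Cantor.to_nat_inj in E. injection E. auto.
Qed.

Lemma flag_neq_even i j k : flag i j <> 2 * k.
Proof. unfold flag. lia. Qed.

Definition consistent (x : Xsp) : Prop :=
  (forall k, x (S (2 * k)) <> None) /\
  (forall i j, x (2 * i) <> None -> x (flag i j) <> Some 0).

Definition omega_flagged (x : Xsp) : Prop :=
  forall i, x (2 * i) = None -> exists j, x (flag i j) = Some 0.

Definition flagged : subset := fun x => consistent x /\ omega_flagged x.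

Definition unflagged_omega (i : nat) : subset :=
  fun x => x (2 * i) = None /\ forall j, x (flag i j) <> Some 0.

Lemma consistent_closed : baire_closed consistent.
Proof.
  intros x nK. apply not_and_or in nK as [h|h].
  - apply not_all_ex_not in h as [k hk]. apply NNPP in hk.
    exists (S (S (2 * k))). intros y Ay [K1 _]. apply (K1 k). rewrite Ay by lia. exact hk.
  - apply not_all_ex_not in h as [i h]. apply not_all_ex_not in h as [j h].
    apply imply_to_and in h as [h1 h2]. apply NNPP in h2.
    pose proof (flag_gt i j).
    exists (S (flag i j)). intros y Ay [_ K2]. apply (K2 i j).
    + rewrite Ay by lia. exact h1.
    + rewrite Ay by lia. exact h2.
Qed.

Lemma consistent_set_unflagged x i v : consistent x ->
  (forall j, x (flag i j) <> Some 0) -> consistent (set_coord x (2 * i) v).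
Proof.
  intros [K1 K2] Hf. split.
  - intro k. rewrite set_coord_other by lia. apply K1.
  - intros i' j. rewrite (set_coord_other x _ v (flag i' j)) by apply flag_neq_even.
    destruct (Nat.eq_dec i' i) as [->|ne]; [intros _; apply Hf|].
    rewrite set_coord_other by lia. apply K2.
Qed.

Lemma consistent_raise_flag x i j : consistent x -> x (2 * i) = None ->
  consistent (set_coord x (flag i j) (Some 0)).
Proof.
  intros [K1 K2] Hi. split.
  - intro k. unfold set_coord. destruct (Nat.eq_dec _ _); [discriminate | apply K1].
  - intros i' j'. rewrite (set_coord_other x _ _ (2 * i'))
      by (intro e; symmetry in e; exact (flag_neq_even _ _ _ e)).
    destruct (Nat.eq_dec (flag i' j') (flag i j)) as [e|ne].
    + apply flag_inj in e as [-> _]. contradiction.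
    + rewrite set_coord_other by exact ne. apply K2.
Qed.

Lemma consistent_not_flagged x : consistent x -> ~ flagged x ->
  exists i, unflagged_omega i x.
Proof.
  intros Kx nA. apply NNPP; intro H. apply nA. split; [exact Kx|].
  intros i Hi. apply NNPP; intro Hf. apply H. exists i. split; [exact Hi|].
  intros j Hj. apply Hf. exists j. exact Hj.
Qed.

Lemma unflagged_omega_nowhere_dense i : nowhere_dense_in consistent (unflagged_omega i).
Proof.
  intros w M Kw. destruct (w (2 * i)) as [k|] eqn:E.
  - exists w, (S (Nat.max M (2 * i))).
    split; [exact Kw | split; [intros c _; reflexivity | split; [lia|]]].
    intros y _ Ay [Hy _]. rewrite Ay in Hy by lia. congruence.
  - pose proof (flag_gt i M).
    exists (set_coord w (flag i M) (Some 0)), (S (flag i M)).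
    split; [apply consistent_raise_flag; assumption|].
    split; [apply agree_set_coord; lia | split; [lia|]].
    intros y _ Ay [_ Hy]. apply (Hy M). rewrite Ay by lia. apply set_coord_same.
Qed.

(** * Continuity of P on A *)

Lemma ord_close_refl m a : ord_close m a a.
Proof. destruct a; simpl; auto. Qed.

Lemma cantor_close_mono N m N' m' x y : N' <= N -> m' <= m ->
  cantor_close N m x y -> cantor_close N' m' x y.
Proof.
  intros HN Hm H i Hi. specialize (H i ltac:(lia)).
  destruct (x i); simpl in *; [exact H|]. destruct (y i); [lia | exact I].
Qed.

Lemma P_continuous_on_coordwise A :
  (forall x, A x -> forall c, exists N m,
     forall y, A y -> cantor_close N m x y -> P y c = P x c) ->
  P_continuous_on A.
Proof.
  intros H x Ax n. induction n as [|n [N [m IH]]].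
  - exists 0, 0. intros. lia.
  - destruct (H x Ax n) as (N' & m' & Hn).
    exists (Nat.max N N'), (Nat.max m m'). intros y Ay Hc i Hi.
    destruct (Nat.eq_dec i n) as [->|ne].
    + apply Hn; [exact Ay|]. revert Hc. apply cantor_close_mono; lia.
    + apply IH; [exact Ay | revert Hc; apply cantor_close_mono; lia | lia].
Qed.

Lemma P_flagged_coord x c : flagged x ->
  exists N, forall y, consistent y -> cantor_close N 0 x y -> P y c = P x c.
Proof.
  intros [[K1 _] Hom]. destruct (x c) as [k|] eqn:E.
  - exists (S c). intros y _ Hc. specialize (Hc c ltac:(lia)).
    rewrite E in Hc. simpl in Hc. unfold P. rewrite Hc, E. reflexivity.
  - destruct (Nat.Even_or_Odd c) as [[i ->]|[i ->]].
    + destruct (Hom i E) as [j Hj]. pose proof (flag_gt i j).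
      exists (S (flag i j)). intros y [_ Ky] Hc.
      specialize (Hc (flag i j) ltac:(lia)). rewrite Hj in Hc. simpl in Hc.
      unfold P. rewrite E. destruct (y (2 * i)) eqn:Ey; [|reflexivity].
      exfalso. apply (Ky i j); congruence.
    + exfalso. apply (K1 i). rewrite <- E. f_equal. lia.
Qed.

Lemma P_continuous_on_flagged : P_continuous_on flagged.
Proof.
  apply P_continuous_on_coordwise. intros x Ax c.
  destruct (P_flagged_coord x c Ax) as [N HN].
  exists N, 0. intros y Ay. apply HN, Ay.
Qed.

Lemma in_IP_of_continuous A : P_continuous_on A -> in_IP A.
Proof.
  intro HA. exists (fun _ => A). split; [intros _; exact HA|].
  intros x Ax. exists 0. exact Ax.
Qed.

(** * Sets in I_P have empty interior in the consistent points *)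

Definition unflagged_above (z : Xsp) (L : nat) : subset := fun y =>
  consistent y /\ agree y z L /\ forall i j, L <= flag i j -> y (flag i j) <> Some 0.

Lemma unflagged_above_closed z L : baire_closed (unflagged_above z L).
Proof.
  intros x nU. apply not_and_or in nU as [h|h].
  - destruct (consistent_closed x h) as [n Hn].
    exists n. intros y Ay [Ky _]. exact (Hn y Ay Ky).
  - apply not_and_or in h as [h|h].
    + apply not_all_ex_not in h as [i h]. apply imply_to_and in h as [h1 h2].
      exists L. intros y Ay [_ [Az _]]. apply h2. rewrite <- (Ay i h1). apply Az, h1.
    + apply not_all_ex_not in h as [i h]. apply not_all_ex_not in h as [j h].
      apply imply_to_and in h as [h1 h2]. apply NNPP in h2.
      exists (S (flag i j)). intros y Ay [_ [_ Hf]]. apply (Hf i j h1).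
      rewrite Ay by lia. exact h2.
Qed.

Lemma unflagged_above_nonempty z L : consistent z -> exists w, unflagged_above z L w.
Proof.
  intros [K1 K2]. exists (fun c => if lt_dec c L then z c else Some 1).
  split; [split|split].
  - intro k. destruct (lt_dec _ _); [apply K1 | discriminate].
  - intros i j. pose proof (flag_gt i j).
    destruct (lt_dec (flag i j) L); [|discriminate].
    destruct (lt_dec (2 * i) L); [apply K2 | lia].
  - intros i Hi. destruct (lt_dec _ _); [reflexivity | lia].
  - intros i j Hl. destruct (lt_dec _ _); [lia | discriminate].
Qed.

Lemma unflagged_above_set_even z L x i v : L <= 2 * i ->
  unflagged_above z L x -> unflagged_above z L (set_coord x (2 * i) v).
Proof.
  intros HL [Kx [Ax Fx]]. split; [|split].
  - apply consistent_set_unflagged; [exact Kx|].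
    intro j. apply Fx. pose proof (flag_gt i j). lia.
  - exact (agree_trans _ _ _ _ (agree_set_coord x _ v L HL) Ax).
  - intros i' j Hl. rewrite set_coord_other by apply flag_neq_even. apply Fx, Hl.
Qed.

Lemma continuous_nowhere_dense z L C :
  P_continuous_on C -> nowhere_dense_in (unflagged_above z L) C.
Proof.
  intro HC. apply NNPP; intro HnC.
  destruct (dense_near_of_not_nowhere_dense _ _ HnC) as (w & M & Uw & D).
  pose (i := M + L). assert (Hi : M <= i /\ L <= i) by (unfold i; lia).
  destruct (D (set_coord w (2 * i) None)) with (M' := S (2 * i)) as (x & Ux & Cx & Ax).
  { apply unflagged_above_set_even; [lia | exact Uw]. }
  { apply agree_set_coord. lia. }
  assert (x_omega : x (2 * i) = None) by (rewrite Ax by lia; apply set_coord_same).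
  destruct (HC x Cx (S (2 * i))) as (N & m & Hcont).
  (* Coordinate 2i becomes finite, yet stays Cantor-close to omega. *)
  destruct (D (set_coord x (2 * i) (Some m))) with (M' := Nat.max N (S (2 * i)))
    as (y & _ & Cy & Ay).
  { apply unflagged_above_set_even; [lia | exact Ux]. }
  { apply (agree_trans _ x); [apply agree_set_coord; lia|].
    apply (agree_trans _ (set_coord w (2 * i) None)).
    { apply (agree_le _ _ (S (2 * i))); [lia | exact Ax]. }
    apply agree_set_coord. lia. }
  assert (close : cantor_close N m x y).
  { intros c Hc. rewrite Ay by lia. destruct (Nat.eq_dec c (2 * i)) as [->|ne].
    - rewrite set_coord_same, x_omega. simpl. lia.
    - rewrite set_coord_other by exact ne. apply ord_close_refl. }
  pose proof (Hcont y Cy close (2 * i) ltac:(lia)) as E.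
  unfold P in E. rewrite x_omega, Ay, set_coord_same in E by lia. discriminate.
Qed.

Lemma in_IP_no_consistent_nbhd z L F : consistent z ->
  (forall y, consistent y -> agree y z L -> F y) -> ~ in_IP F.
Proof.
  intros Kz HF [C [HC Hcov]].
  destruct (baire_category (unflagged_above z L) (unflagged_above_closed z L) C
              (fun k => continuous_nowhere_dense z L (C k) (HC k))
              (unflagged_above_nonempty z L Kz)) as (x & [Kx [Ax _]] & Hx).
  destruct (Hcov x (HF x Kx Ax)) as [k Ck]. exact (Hx k Ck).
Qed.

Lemma closed_in_IP_nowhere_dense F :
  baire_closed F -> in_IP F -> nowhere_dense_in consistent F.
Proof.
  intros Fcl FIP. apply NNPP; intro H.
  destruct (dense_near_of_not_nowhere_dense _ _ H) as (w & M & Kw & D).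
  apply (in_IP_no_consistent_nbhd w M F Kw); [|exact FIP].
  exact (closed_dense_near_sub F consistent w M Fcl D).
Qed.

(** * A is Borel *)

Lemma borel_ext (A B : subset) : (forall x, A x <-> B x) -> borel A -> borel B.
Proof.
  intros H HA. replace B with A; [exact HA|].
  apply functional_extensionality; intro x. apply propositional_extensionality, H.
Qed.

Lemma borel_closed F : baire_closed F -> borel F.
Proof.
  intro H. apply (borel_ext (fun x => ~ ~ F x)).
  - intro x. split; [apply NNPP | auto].
  - apply borel_compl, borel_open, H.
Qed.

Lemma borel_or A B : borel A -> borel B -> borel (fun x => A x \/ B x).
Proof.
  intros HA HB.
  apply (borel_ext (fun x => exists n, (match n with 0 => A | _ => B end) x)).
  - intro x. split.
    + intros [[|n] h]; auto.
    + intros [h|h]; [exists 0 | exists 1]; exact h.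
  - apply borel_union. intros [|n]; assumption.
Qed.

Lemma borel_all (A : nat -> subset) :
  (forall n, borel (A n)) -> borel (fun x => forall n, A n x).
Proof.
  intro H. apply (borel_ext (fun x => ~ exists n, ~ A n x)).
  - intro x. split.
    + intros h n. apply NNPP; intro h'. apply h. exists n. exact h'.
    + intros h [n hn]. exact (hn (h n)).
  - apply borel_compl, borel_union. intro n. apply borel_compl, H.
Qed.

Lemma borel_imp A B : borel A -> borel B -> borel (fun x => A x -> B x).
Proof.
  intros HA HB. apply (borel_ext (fun x => ~ A x \/ B x)).
  - intro x. split; [tauto | apply imply_to_or].
  - apply borel_or; [apply borel_compl|]; assumption.
Qed.

Lemma borel_and A B : borel A -> borel B -> borel (fun x => A x /\ B x).
Proof.
  intros HA HB. apply (borel_ext (fun x => ~ (~ A x \/ ~ B x))).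
  - intro x. split; [intro h; split; apply NNPP; tauto | tauto].
  - apply borel_compl, borel_or; apply borel_compl; assumption.
Qed.

Lemma borel_coord_eq c v : borel (fun x => x c = v).
Proof.
  apply borel_open. intros x Hx. exists (S c). intros y Ay. rewrite Ay by lia. exact Hx.
Qed.

Lemma flagged_borel : borel flagged.
Proof.
  apply borel_and; [apply borel_closed, consistent_closed|].
  apply borel_all. intro i. apply borel_imp; [apply borel_coord_eq|].
  apply borel_union. intro j. apply borel_coord_eq.
Qed.

Theorem mainTheorem8 :
  exists A : subset,
    borel A /\ in_IP A /\
    ~ (exists F : nat -> subset,
         (forall n, baire_closed (F n) /\ in_IP (F n)) /\
         (forall x, A x -> exists n, F n x)).
Proof.
  exists flagged. split; [exact flagged_borel | split].
  - apply in_IP_of_continuous, P_continuous_on_flagged.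
  - intros (F & HF & Hcov).
    destruct (baire_category2 consistent F unflagged_omega consistent_closed)
      as (x & Kx & notF & notU).
    + exists (fun _ => Some 1). split; intros; discriminate.
    + intro n. apply closed_in_IP_nowhere_dense; apply HF.
    + exact unflagged_omega_nowhere_dense.
    + destruct (classic (flagged x)) as [Ax|nAx].
      * destruct (Hcov x Ax) as [n Fn]. exact (notF n Fn).
      * destruct (consistent_not_flagged x Kx nAx) as [i Ui]. exact (notU i Ui).
Qed.
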